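(* Let $l_0\in\mathbb{N}$, let $\eta=(\eta_l)_{l\ge1}$ be a strictly positive sequence with $0<\sup_{l\ge l_0}\eta_l<1$, and let $S$ and the minimal $S$-majorant $\xi\mapsto\widehat{\xi}$ be as in the context. Then every nonnegative, nonincreasing, bounded sequence $\xi=(\xi_l)_{l\ge1}$ satisfies $$\sum_{l=1}^\infty\xi_l<\infty\iff\sum_{l=1}^\infty\widehat{\xi}_l<\infty .$$
   Context: $S$ is the set of real sequences $\sigma=(\sigma_l)_{l\ge1}$ such that (i) $\sigma_l\ge\sigma_{l+1}\ge0$ for all $l\in\mathbb{N}$, and (ii) $\sigma_l-\sigma_{l+1}\ge\eta_l(\sigma_{l-1}-\sigma_l)$ for all $l\ge l_0$ with $l\ge2$. For a bounded sequence $\xi$, a sequence $\sigma\in S$ is an $S$-majorant of $\xi$ if $\sigma_l\ge\xi_l$ for all $l\ge l_0$, and $\widehat{\xi}$ is the pointwise infimum of all $S$-majorants of $\xi$ (it belongs to $S$ and is the minimal $S$-majorant). *)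

From HB Require Import structures.
From mathcomp Require Import all_boot all_order all_algebra.
From mathcomp Require Import all_classical all_reals all_analysis.
Set Implicit Arguments. Unset Strict Implicit. Unset Printing Implicit Defensive.
Import Order.TTheory GRing.Theory Num.Theory.
Local Open Scope classical_set_scope.
Local Open Scope ring_scope.

(* Sequences are functions nat -> R; only indices l >= 1 are meaningful,
   the value at index 0 is ignored everywhere. *)

Definition inS {R : realType} (l0 : nat) (eta : nat -> R) (sigma : nat -> R) : Prop :=
  (forall l : nat, (1 <= l)%N -> sigma l >= sigma l.+1 /\ sigma l.+1 >= 0) /\
  (forall l : nat, (l0 <= l)%N -> (2 <= l)%N ->
     sigma l - sigma l.+1 >= eta l * (sigma l.-1 - sigma l)).

Definition S_majorant {R : realType} (l0 : nat) (eta : nat -> R) (xi sigma : nat -> R) : Prop :=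
  inS l0 eta sigma /\ (forall l : nat, (l0 <= l)%N -> (1 <= l)%N -> sigma l >= xi l).

Definition hat {R : realType} (l0 : nat) (eta : nat -> R) (xi : nat -> R) : nat -> R :=
  fun l => inf [set sigma l | sigma in [set sigma | S_majorant l0 eta xi sigma]].

(* If eta <= q < 1 from l0 on, then xi + c is an S-majorant of xi, where the
   carry c accumulates the decrements of xi with geometric damping:
   c_(l+1) = q (c_l + xi_l - xi_(l+1)).  The carries sum to at most
   q xi_1 / (1 - q), so summability of xi gives that of its minimal S-majorant;
   conversely the minimal S-majorant dominates xi from l0 on. *)
From HB Require Import structures.
From mathcomp Require Import all_boot all_order all_algebra.
From mathcomp Require Import all_classical all_reals all_analysis.
From mathcomp Require Import ring lra.
Set Implicit Arguments. Unset Strict Implicit. Unset Printing Implicit Defensive.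
Import Order.TTheory GRing.Theory Num.Theory.
Local Open Scope classical_set_scope.
Local Open Scope ring_scope.

Section nneseries_real.
Variables (R : realType) (N : nat).
Implicit Types f g : nat -> R.

Lemma nneseries_le_bound f (B : R) :
  (forall k, (N <= k)%N -> 0 <= f k) ->
  (forall n, \sum_(N <= k < n) f k <= B) ->
  (\sum_(N <= k <oo) (f k)%:E <= B%:E)%E.
Proof.
move=> f0 fB; apply: lime_le.
  by apply: is_cvg_nneseries => k Nk _; rewrite lee_fin f0.
by apply: nearW => n; rewrite sumEFin lee_fin.
Qed.

Lemma lee_nneseries_from f g :
  (forall k, (N <= k)%N -> 0 <= f k <= g k) ->
  (\sum_(N <= k <oo) (f k)%:E <= \sum_(N <= k <oo) (g k)%:E)%E.
Proof.
move=> fg; have fE0 k : (N <= k)%N -> (0 <= (f k)%:E)%E.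
  by move=> /fg /andP[f0 _]; rewrite lee_fin.
have gE0 k : (N <= k)%N -> (0 <= (g k)%:E)%E.
  by move=> /fg /andP[f0 fk_le]; rewrite lee_fin (le_trans f0).
apply: lee_lim.
- by apply: is_cvg_nneseries => k Nk _; exact: fE0.
- by apply: is_cvg_nneseries => k Nk _; exact: gE0.
- apply: nearW => n; rewrite !sumEFin lee_fin; apply: ler_sum_nat.
  by move=> k /andP[Nk _]; have /andP[] := fg k Nk.
Qed.

Lemma nneseries_lty_tail f M :
  (forall k, (N <= k)%N -> 0 <= f k) -> (N <= M)%N ->
  (\sum_(N <= k <oo) (f k)%:E < +oo)%E <-> (\sum_(M <= k <oo) (f k)%:E < +oo)%E.
Proof.
move=> f0 NM; have f0' k : (N <= k)%N -> (0 <= (f k)%:E)%E by rewrite lee_fin => /f0.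
rewrite (nneseries_split _ (M - N) f0') subnKC // sumEFin.
split => [|tail_lty]; last exact: lte_add_pinfty (ltry _) tail_lty.
apply: le_lt_trans; apply: leeDr; rewrite lee_fin big_nat_cond.
by apply: sumr_ge0 => k /andP[/andP[Nk _] _]; exact: f0.
Qed.

End nneseries_real.

Section geometric_majorant.
Variables (R : realType) (q : R) (xi : nat -> R).
Hypotheses (q_ge0 : 0 <= q) (q_lt1 : q < 1).
Hypothesis xi_ge0 : forall l, (1 <= l)%N -> 0 <= xi l.
Hypothesis xi_noninc : forall l, (1 <= l)%N -> xi l.+1 <= xi l.

(* Index 0 is outside the sequence, so it contributes no decrement. *)
Definition decrement l := if l is 0%N then 0 else xi l - xi l.+1.

Fixpoint carry n := if n is m.+1 then q * (carry m + decrement m) else 0.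

Definition geometric_majorant l := xi l + carry l.

Lemma decrement_ge0 l : 0 <= decrement l.
Proof. by case: l => [|l] //=; rewrite subr_ge0 xi_noninc. Qed.

Lemma carryS n : carry n.+1 = q * (carry n + decrement n).
Proof. by []. Qed.

Lemma carry_ge0 n : 0 <= carry n.
Proof.
elim: n => [|n IHn] //=.
by rewrite mulr_ge0 // addr_ge0 // decrement_ge0.
Qed.

Lemma geometric_majorant_subSn l : (1 <= l)%N ->
  geometric_majorant l - geometric_majorant l.+1 = (1 - q) * (carry l + decrement l).
Proof. by case: l => [|l] // _; rewrite /geometric_majorant /=; ring. Qed.

Lemma carry_partial_sum n : (1 <= n)%N ->
  (1 - q) * (\sum_(1 <= l < n) carry l) + carry n = q * (xi 1 - xi n).
Proof.
elim: n => [|[|n] IHn] // _; first by rewrite big_geq //= mulr0 !add0r subrr mulr0.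
by rewrite big_nat_recr //= mulrDr; move: (IHn isT) => /=; lra.
Qed.

Lemma carry_partial_sum_le n : \sum_(1 <= l < n) carry l <= q * xi 1 / (1 - q).
Proof.
have q1_gt0 : 0 < 1 - q by rewrite subr_gt0.
rewrite ler_pdivlMr //; case: n => [|n].
  by rewrite big_geq // mul0r mulr_ge0 // xi_ge0.
have := @carry_partial_sum n.+1 isT.
have := carry_ge0 n.+1; have := mulr_ge0 q_ge0 (@xi_ge0 n.+1 isT).
lra.
Qed.

Lemma geometric_majorant_series_lty :
  (\sum_(1 <= l <oo) (xi l)%:E < +oo)%E ->
  (\sum_(1 <= l <oo) (geometric_majorant l)%:E < +oo)%E.
Proof.
move=> xi_lty; under eq_eseriesr do rewrite EFinD.
rewrite nneseriesD => [|l l1 _|l _ _]; rewrite ?lee_fin ?xi_ge0 ?carry_ge0 //.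
apply: lte_add_pinfty xi_lty (le_lt_trans _ (ltry (q * xi 1 / (1 - q)))).
by apply: nneseries_le_bound => [l _|n]; [exact: carry_ge0|exact: carry_partial_sum_le].
Qed.

Variables (l0 : nat) (eta : nat -> R).
Hypothesis eta_le_q : forall l, (l0 <= l)%N -> (1 <= l)%N -> eta l <= q.

Lemma geometric_majorant_inS : inS l0 eta geometric_majorant.
Proof.
have q1_ge0 : 0 <= 1 - q by rewrite subr_ge0 ltW.
have step_ge0 l : 0 <= (1 - q) * (carry l + decrement l).
  by rewrite mulr_ge0 // addr_ge0 ?carry_ge0 ?decrement_ge0.
split=> [l l1|[|[|k]] // l0k _].
  rewrite -subr_ge0 geometric_majorant_subSn // step_ge0; split => //.
  by rewrite addr_ge0 ?carry_ge0 ?xi_ge0.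
rewrite /= !geometric_majorant_subSn //.
apply: le_trans (ler_wpM2r (step_ge0 k.+1) (eta_le_q l0k isT)) _.
(* the carry alone already retains the fraction q of the previous step *)
rewrite [carry k.+2]carryS [in X in _ <= X]mulrDr mulrCA lerDl.
by rewrite mulr_ge0 ?decrement_ge0.
Qed.

Lemma geometric_majorant_S_majorant : S_majorant l0 eta xi geometric_majorant.
Proof.
split; first exact: geometric_majorant_inS.
by move=> l _ _; rewrite lerDl carry_ge0.
Qed.

End geometric_majorant.

Section minimal_majorant.
Variables (R : realType) (l0 : nat) (eta xi : nat -> R).
Hypothesis majorant_exists : exists sigma, S_majorant l0 eta xi sigma.

Let majorant_values l := [set sigma l | sigma in [set sigma | S_majorant l0 eta xi sigma]].

Let majorant_values_nonempty l : majorant_values l !=set0.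
Proof. by have [sigma ?] := majorant_exists; exists (sigma l), sigma. Qed.

Let majorant_values_ge0 l : (1 <= l)%N -> lbound (majorant_values l) 0.
Proof.
move=> l1 _ [sigma [[S_dec _] _] <-].
by have [le_next next_ge0] := S_dec l l1; apply: le_trans le_next.
Qed.

Lemma hat_ge0 l : (1 <= l)%N -> 0 <= hat l0 eta xi l.
Proof.
by move=> l1; apply: lb_le_inf; [exact: majorant_values_nonempty|exact: majorant_values_ge0].
Qed.

Lemma hat_le_S_majorant sigma l : S_majorant l0 eta xi sigma -> (1 <= l)%N ->
  hat l0 eta xi l <= sigma l.
Proof.
move=> sigma_maj l1; apply: (ge_inf (E := majorant_values l)).
  by exists 0; exact: majorant_values_ge0.
by exists sigma.
Qed.

Lemma le_hat l : (l0 <= l)%N -> (1 <= l)%N -> xi l <= hat l0 eta xi l.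
Proof.
move=> l0l l1; apply: lb_le_inf; first exact: majorant_values_nonempty.
by move=> _ [sigma [_ sigma_ge] <-]; exact: sigma_ge.
Qed.

End minimal_majorant.

Lemma sup_gt0_has_sup (R : realType) (E : set R) : 0 < sup E -> has_sup E.
Proof. by apply: contraPP => /sup_out ->; rewrite ltxx. Qed.

Theorem lemma23 (R : realType) (l0 : nat) (eta : nat -> R)
  (eta_pos : forall l : nat, (1 <= l)%N -> 0 < eta l)
  (sup_pos : 0 < sup [set eta l | l in [set l : nat | (l0 <= l)%N /\ (1 <= l)%N]])
  (sup_lt1 : sup [set eta l | l in [set l : nat | (l0 <= l)%N /\ (1 <= l)%N]] < 1)
  (xi : nat -> R)
  (xi_nneg : forall l : nat, (1 <= l)%N -> 0 <= xi l)
  (xi_noninc : forall l : nat, (1 <= l)%N -> xi l.+1 <= xi l)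
  (xi_bnd : exists M : R, forall l : nat, (1 <= l)%N -> `|xi l| <= M) :
  ((\sum_(1 <= l <oo) (xi l)%:E < +oo)%E <->
   (\sum_(1 <= l <oo) (hat l0 eta xi l)%:E < +oo)%E).
Proof.
set q := sup _ in sup_pos sup_lt1.
(* sup_pos is needed since a set without upper bound has sup 0. *)
have eta_le_q l : (l0 <= l)%N -> (1 <= l)%N -> eta l <= q.
  by move=> l0l l1; apply: (sup_upper_bound (sup_gt0_has_sup sup_pos)); exists l.
have u_maj : S_majorant l0 eta xi (geometric_majorant q xi).
  by apply: geometric_majorant_S_majorant => //; exact: ltW.
have maj_exists : exists sigma, S_majorant l0 eta xi sigma by exists (geometric_majorant q xi).
split => [xi_lty|hat_lty].
- apply: le_lt_trans (lee_nneseries_from (g := geometric_majorant q xi) _) _.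
    by move=> l l1; rewrite hat_ge0 // hat_le_S_majorant.
  by apply: geometric_majorant_series_lty => //; exact: ltW.
- have l0_l1 : (1 <= maxn l0 1)%N by rewrite leq_maxr.
  rewrite (nneseries_lty_tail xi_nneg l0_l1).
  rewrite (nneseries_lty_tail (hat_ge0 maj_exists) l0_l1) in hat_lty.
  apply: le_lt_trans (lee_nneseries_from _) hat_lty => l.
  rewrite geq_max => /andP[l0l l1].
  by rewrite xi_nneg // le_hat.
Qed.
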